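(* Let $n\ge1$ and $\pi\in L_{n+1}$. Then there exist unique elements $\pi_j\in R_j^L$, $0\le j\le n-1$, such that $\pi=\pi_0\pi_1\cdots\pi_{n-1}$.
   Context: $B_m$ is the group of bijections $\sigma$ of $\{\pm1,\dots,\pm m\}$ with $\sigma(-i)=-\sigma(i)$, written in window notation $[\sigma(1),\dots,\sigma(m)]$, with product $(\sigma\tau)(i)=\sigma(\tau(i))$. Let $s_0=[-1,2,\dots,m]$ and $s_i=$ the transposition of $i$ and $i+1$. For $\sigma\in B_m$ let $|\sigma|$ be the permutation $i\mapsto|\sigma(i)|$, and $L_m=\{\sigma\in B_m:|\sigma|\text{ is even}\}$. In $L_{n+1}$ let $a_0=s_0$ and $a_i=s_1s_{i+1}$ for $1\le i\le n-1$. Let $R_0^L=\{1,\ a_0,\ a_1a_0a_1^{-1},\ a_0a_1a_0a_1^{-1}\}$ (here, when $n=1$, $a_1$ denotes $s_1s_2$ computed in a larger group is not needed: for $n=1$ one has $R_0^L=L_2$ as an explicit set, namely $\{[1,2],[-1,2],[1,-2],[-1,-2]\}$). For $1\le j\le n-1$ let $R_j^A=\{1,\ a_j,\ a_ja_{j-1},\ \dots,\ a_j\cdots a_2,\ a_j\cdots a_2a_1,\ a_j\cdots a_2a_1^{-1}\}$ and $R_j^L=R_j^A\cup\{a_j\cdots a_2a_1^{-1}a_0,\ a_j\cdots a_2a_1^{-1}a_0a_1^{-1}\}\cup\{a_j\cdots a_2a_1^{-1}a_0a_1a_2\cdots a_k:\ 1\le k\le j\}$, where $a_j\cdots a_2$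 is the empty product when $j=1$. *)

From mathcomp Require Import all_boot all_order all_fingroup.
Set Implicit Arguments. Unset Strict Implicit. Unset Printing Implicit Defensive.

(* The point +k (1<=k<=m) is encoded as (Ordinal (k-1), false),
   the point -k as (Ordinal (k-1), true). *)
Definition pt (m : nat) := ('I_m * bool)%type.

Definition negpt {m} (x : pt m) : pt m := (x.1, ~~ x.2).

(* The paper's product: (sigma tau)(i) = sigma (tau i).  MathComp's
   (tau * sigma)%g applies tau first, then sigma. *)
Definition bmul {m} (s t : {perm pt m}) : {perm pt m} := (t * s)%g.

Definition bprod {m} (l : seq {perm pt m}) : {perm pt m} := foldr bmul 1%g l.

Definition signed {m} (s : {perm pt m}) : bool :=
  [forall x, s (negpt x) == negpt (s x)].

Definition Bm (m : nat) : pred {perm pt m} := fun s => signed s.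

Definition Lm (m : nat) : pred {perm pt m} := fun s =>
  signed s &&
  [exists p : {perm 'I_m}, [forall i, p i == (s (i, false)).1] && ~~ odd_perm p].

Definition flipfun {m} (P : pred 'I_m) (x : pt m) : pt m :=
  if P x.1 then negpt x else x.
Lemma flipfunK m (P : pred 'I_m) : cancel (flipfun P) (flipfun P).
Proof. by case=> i b; rewrite /flipfun /negpt /=; case E: (P i); rewrite /= ?E ?negbK. Qed.
Definition flipS {m} (P : pred 'I_m) : {perm pt m} := perm (can_inj (flipfunK P)).

Definition liftfun {m} (p : {perm 'I_m}) (x : pt m) : pt m := (p x.1, x.2).
Lemma liftfun_inj m (p : {perm 'I_m}) : injective (liftfun p).
Proof. by case=> i b [j c] [] /perm_inj -> ->. Qed.
Definition liftS {m} (p : {perm 'I_m}) : {perm pt m} := perm (@liftfun_inj m p).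

Definition s0 (n : nat) : {perm pt n.+1} := flipS (fun i : 'I_n.+1 => val i == 0).
(* s_i, 1 <= i <= n : transposition of i and i+1 (0-indexed: i-1 and i) *)
Definition sg (n i : nat) : {perm pt n.+1} :=
  liftS (tperm (inord i.-1 : 'I_n.+1) (inord i)).

Definition ag (n i : nat) : {perm pt n.+1} :=
  if i == 0 then s0 n else bmul (sg n 1) (sg n i.+1).

(* a_j a_{j-1} ... a_k  (empty product if k > j) *)
Definition adec (n k j : nat) : {perm pt n.+1} :=
  bprod [seq ag n i | i <- rev (iota k (j.+1 - k))].
Definition ainc (n k : nat) : {perm pt n.+1} :=
  bprod [seq ag n i | i <- iota 1 k].

Definition R0L (n : nat) : seq {perm pt n.+1} :=
  if n == 1 then
    [:: 1%g; flipS (fun i : 'I_n.+1 => val i == 0);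
        flipS (fun i : 'I_n.+1 => val i == 1);
        flipS (fun i : 'I_n.+1 => val i <= 1)]
  else
    [:: 1%g; ag n 0; bprod [:: ag n 1; ag n 0; ((ag n 1)^-1)%g];
        bprod [:: ag n 0; ag n 1; ag n 0; ((ag n 1)^-1)%g]%g].

Definition RjA (n j : nat) : seq {perm pt n.+1} :=
  [seq adec n k j | k <- iota 1 j.+1] ++ [:: bmul (adec n 2 j) ((ag n 1)^-1)%g].

Definition RjL (n j : nat) : seq {perm pt n.+1} :=
  let q := bmul (adec n 2 j) ((ag n 1)^-1)%g in
  RjA n j ++ [:: bmul q (ag n 0); bprod [:: q; ag n 0; ((ag n 1)^-1)%g]%g]
          ++ [seq bprod [:: q; ag n 0; ainc n k] | k <- iota 1 j].

Definition RL (n j : nat) : seq {perm pt n.+1} :=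
  if j == 0 then R0L n else RjL n j.
Arguments Bm m : clear implicits.
Arguments Lm m : clear implicits.

(* Let G_j be the copy of L_(j+2) in L_(n+1), i.e. the elements fixing every point beyond
   j+2. Then G_(j-1) is the stabilizer of the point j+2 in G_j, so writing pi in G_j as
   pi' r with pi' in G_(j-1) amounts to choosing r with r^-1 (j+2) = pi^-1 (j+2), and r is
   unique as soon as r |-> r^-1 (j+2) is injective on the candidates. R_j^L is such a set of
   representatives: its 2(j+2) elements send the 2(j+2) points +-1, ..., +-(j+2) to j+2, one
   each. Peeling off one factor at a time ends in G_0 = L_2, which consists of the four sign
   changes of R_0^L because an even permutation of two points is trivial. *)

From mathcomp Require Import all_boot all_order all_fingroup zify.
Set Implicit Arguments. Unset Strict Implicit. Unset Printing Implicit Defensive.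

Lemma bmulE m (s t : {perm pt m}) x : bmul s t x = s (t x).
Proof. by rewrite /bmul permM. Qed.

Lemma bprod_rcons m (l : seq {perm pt m}) s : bprod (rcons l s) = bmul (bprod l) s.
Proof. by elim: l => [|t l IH] /=; rewrite ?IH /bmul ?mul1g ?mulg1 ?mulgA. Qed.

Section GroupClosure.
Variables (m : nat) (G : {group {perm pt m}}).

Lemma group_bmul s t : s \in G -> t \in G -> bmul s t \in G.
Proof. by move=> Gs Gt; rewrite /bmul groupM. Qed.

Lemma group_bprod l : {subset l <= G} -> bprod l \in G.
Proof.
elim: l => [|s l IH] sub_lG /=; first exact: group1.
apply: group_bmul; first by rewrite sub_lG ?mem_head.
by apply: IH => t lt; rewrite sub_lG // inE lt orbT.
Qed.

End GroupClosure.

Section StabilizerTransversal.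
Variables (m : nat) (G H : {group {perm pt m}}) (x : pt m) (R : seq {perm pt m}).
Hypothesis H_stab : H =i [pred s in G | s x == x].
Hypothesis R_sub : {subset R <= G}.
Hypothesis R_inj : {in R &, injective (fun r : {perm pt m} => (r^-1)%g x)}.
Hypothesis R_cover :
  {in G, forall s : {perm pt m}, (s^-1)%g x \in [seq (r^-1)%g x | r : {perm pt m} <- R]}.

Lemma stab_factor s : s \in G -> exists2 r, r \in R & exists2 h, h \in H & s = bmul h r.
Proof.
move=> Gs; have /mapP[r Rr sx_rx] := R_cover Gs.
exists r => //; exists (r^-1 * s)%g; last by rewrite /bmul mulgA mulgV mul1g.
by rewrite H_stab inE groupM ?groupV ?Gs ?R_sub //= permM -sx_rx permKV.
Qed.

Lemma stab_factor_unique h h' r r' : h \in H -> h' \in H -> r \in R -> r' \in R ->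
  bmul h r = bmul h' r' -> h = h' /\ r = r'.
Proof.
have inv_x k t : k \in H -> ((bmul k t)^-1)%g x = (t^-1)%g x.
  rewrite H_stab inE => /andP[_ /eqP kx].
  by rewrite /bmul invMg permM -{1}kx permK.
move=> Hh Hh' Rr Rr' eq_hr.
have eq_r : r = r' by apply: R_inj; rewrite //= -(inv_x h) // eq_hr inv_x.
by split=> //; move: eq_hr; rewrite /bmul eq_r => /mulgI.
Qed.

End StabilizerTransversal.

Lemma bprod_iotaS m (f : nat -> {perm pt m}) j :
  bprod [seq f i | i <- iota 0 j.+1] = bmul (bprod [seq f i | i <- iota 0 j]) (f j).
Proof. by rewrite -addn1 iotaD map_cat cats1 bprod_rcons. Qed.

Section StabilizerChain.
Variables (m N : nat) (G : nat -> {group {perm pt m}}) (R : nat -> seq {perm pt m}).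
Variable x : nat -> pt m.
Hypothesis R0_G0 : R 0 =i G 0.
Hypothesis G_stab : forall j, j.+1 < N -> G j =i [pred s in G j.+1 | s (x j.+1) == x j.+1].
Hypothesis R_sub : forall j, j.+1 < N -> {subset R j.+1 <= G j.+1}.
Hypothesis R_inj :
  forall j, j.+1 < N -> {in R j.+1 &, injective (fun r : {perm pt m} => (r^-1)%g (x j.+1))}.
Hypothesis R_cover : forall j, j.+1 < N ->
  {in G j.+1, forall s : {perm pt m},
     (s^-1)%g (x j.+1) \in [seq (r^-1)%g (x j.+1) | r : {perm pt m} <- R j.+1]}.

Lemma chain_mono i j : i <= j < N -> {subset G i <= G j}.
Proof.
move=> /andP[le_ij lt_jN]; elim: j le_ij lt_jN => [|j IH] le_ij lt_jN s Gis.
  by move: le_ij Gis; rewrite leqn0 => /eqP->.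
move: le_ij; rewrite leq_eqVlt => /orP[/eqP<- // | lt_ij].
by have := IH lt_ij (ltnW lt_jN) s Gis; rewrite G_stab // inE => /andP[].
Qed.

Lemma chain_R_sub i j : i <= j < N -> {subset R i <= G j}.
Proof.
move=> /andP[le_ij lt_jN] r; case: i le_ij => [|i] le_ij Rir.
  by apply: (@chain_mono 0 j) => //; rewrite -R0_G0.
by apply: (@chain_mono i.+1 j); rewrite ?le_ij // R_sub // (leq_ltn_trans le_ij).
Qed.

Lemma chain_factor j s : j < N -> s \in G j ->
  exists2 f : nat -> {perm pt m},
    forall i, i <= j -> f i \in R i & s = bprod [seq f i | i <- iota 0 j.+1].
Proof.
elim: j s => [|j IH] s lt_jN Gjs.
  exists (fun=> s) => [i|]; first by rewrite leqn0 => /eqP->; rewrite R0_G0.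
  by rewrite /= /bmul mul1g.
have [r Rr [h Hh ->]] := stab_factor (G_stab lt_jN) (R_sub lt_jN) (R_cover lt_jN) Gjs.
have [f Rf ->] := IH h (ltnW lt_jN) Hh.
exists (fun i => if i == j.+1 then r else f i) => [i le_ij|].
  by case: eqP => [-> //|/eqP ne_ij]; apply: Rf; rewrite -ltnS ltn_neqAle ne_ij.
rewrite [in RHS]bprod_iotaS eqxx; congr (bmul (bprod _) _); apply/eq_in_map => i.
by rewrite mem_iota add0n => /andP[_ /ltn_eqF->].
Qed.

Lemma chain_factor_unique j (f g : nat -> {perm pt m}) : j < N ->
  (forall i, i <= j -> f i \in R i) -> (forall i, i <= j -> g i \in R i) ->
  bprod [seq f i | i <- iota 0 j.+1] = bprod [seq g i | i <- iota 0 j.+1] ->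
  forall i, i <= j -> f i = g i.
Proof.
elim: j => [|j IH] lt_jN Rf Rg eq_fg i le_ij.
  by move: le_ij eq_fg; rewrite leqn0 => /eqP-> /=; rewrite /bmul !mul1g.
have in_Gj (h : nat -> {perm pt m}) : (forall i, i <= j.+1 -> h i \in R i) ->
    bprod [seq h i | i <- iota 0 j.+1] \in G j.
  move=> Rh; apply: group_bprod => y /mapP[k]; rewrite mem_iota add0n => /andP[_ lt_kj] ->.
  by apply: (@chain_R_sub k j); rewrite ?Rh ?(ltnW lt_kj) // -ltnS lt_kj ltnW.
move: eq_fg; rewrite (bprod_iotaS f) (bprod_iotaS g) => eq_fg.
have [eq_pre eq_last] := stab_factor_unique (G_stab lt_jN) (R_inj lt_jN)
  (in_Gj f Rf) (in_Gj g Rg) (Rf _ (leqnn _)) (Rg _ (leqnn _)) eq_fg.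
move: le_ij; rewrite leq_eqVlt => /orP[/eqP-> // | lt_ij].
have le_ij : i <= j by rewrite -ltnS.
by apply: (IH (ltnW lt_jN) _ _ eq_pre i le_ij) => k le_kj; [apply/Rf/leqW | apply/Rg/leqW].
Qed.

End StabilizerChain.

Section SignedPermutations.
Variable m : nat.
Implicit Types (s t : {perm pt m}) (p : {perm 'I_m}) (P Q : pred 'I_m) (x y : pt m) (k : nat).

Definition abs_even s : bool :=
  [exists p : {perm 'I_m}, [forall i, p i == (s (i, false)).1] && ~~ odd_perm p].

Definition fixes_above k s : bool := [forall i : 'I_m, (k < i) ==> (s (i, false) == (i, false))].

(* The copy of L_(k+1) inside L_m: [i : 'I_m] is the paper's point i+1, so the elements of
   [Lfix k] fix the paper's points beyond k+1. *)
Definition Lfix k : {set {perm pt m}} := [set s | [&& signed s, abs_even s & fixes_above k s]].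

Lemma signedP s : reflect (forall x, s (negpt x) = negpt (s x)) (signed s).
Proof. by apply: (iffP forallP) => s_neg x; apply/eqP. Qed.

Lemma signed_fst s i b : signed s -> (s (i, b)).1 = (s (i, false)).1.
Proof. by case: b => // /signedP s_neg; rewrite -[(i, true)]/(negpt (i, false)) s_neg. Qed.

Lemma abs_evenP s :
  reflect (exists2 p : {perm 'I_m}, forall i, p i = (s (i, false)).1 & ~~ odd_perm p) (abs_even s).
Proof.
apply: (iffP existsP) => [[p /andP[/forallP abs_p ev_p]] | [p abs_p ev_p]].
  by exists p => // i; apply/eqP.
by exists p; rewrite ev_p andbT; apply/forallP => i; rewrite abs_p.
Qed.

Lemma fixes_aboveP k s : reflect (forall i : 'I_m, k < i -> s (i, false) = (i, false))
  (fixes_above k s).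
Proof.
apply: (iffP forallP) => fix_s i; first by move/(implyP (fix_s i))/eqP.
by apply/implyP => /fix_s ->.
Qed.

Lemma Lfix_group_set k : group_set (Lfix k).
Proof.
apply/group_setP; split.
  rewrite inE; apply/and3P; split; first by apply/signedP => x; rewrite !perm1.
    by apply/abs_evenP; exists 1%g => [i|]; rewrite ?odd_perm1 ?perm1.
  by apply/fixes_aboveP => i _; rewrite perm1.
move=> s t; rewrite !inE => /and3P[/signedP s_neg /abs_evenP[p abs_p ev_p] /fixes_aboveP fix_s].
move=> /and3P[t_sgn /abs_evenP[q abs_q ev_q] /fixes_aboveP fix_t].
apply/and3P; split.
- by apply/signedP => x; rewrite !permM s_neg (signedP _ t_sgn).
- apply/abs_evenP; exists (p * q)%g; last by rewrite odd_permM (negbTE ev_p) (negbTE ev_q).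
  by move=> i; rewrite !permM abs_p abs_q -(signed_fst _ (s (i, false)).2 t_sgn); case: (s _).
- by apply/fixes_aboveP => i lt_ki; rewrite permM fix_s ?fix_t.
Qed.

Canonical Lfix_group k := group (Lfix_group_set k).

Lemma Lm_sub_Lfix : {subset Lm m <= Lfix m.-1}.
Proof.
move=> s; rewrite unfold_in inE => /andP[s_sgn s_ev]; apply/and3P; split=> //.
by apply/fixes_aboveP => i; rewrite ltnNge -ltnS prednK ?ltn_ord // (leq_ltn_trans _ (ltn_ord i)).
Qed.

Lemma Lfix_mono k k' : k <= k' -> {subset Lfix k <= Lfix k'}.
Proof.
move=> le_kk' s; rewrite !inE => /and3P[-> -> /fixes_aboveP fix_s].
by apply/fixes_aboveP => i lt_k'i; rewrite fix_s // (leq_ltn_trans le_kk').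
Qed.

Lemma Lfix_fixed k s (i : 'I_m) b : s \in Lfix k -> k < i -> s (i, b) = (i, b).
Proof.
rewrite inE => /and3P[/signedP s_neg _ /fixes_aboveP fix_s] lt_ki.
by case: b; rewrite -?[(i, true)]/(negpt (i, false)) ?s_neg fix_s.
Qed.

Lemma Lfix_small k s y : s \in Lfix k -> y.1 <= k -> (s y).1 <= k.
Proof.
move=> Ls le_yk; rewrite leqNgt; apply: contraL le_yk => lt_k_sy.
have /perm_inj <- : s (s y) = s y by case: (s y) lt_k_sy => i b /= /(Lfix_fixed b Ls).
by rewrite -ltnNge.
Qed.

Lemma flipSE P x : flipS P x = flipfun P x.
Proof. by rewrite permE. Qed.

Lemma flipS_ext P Q : P =1 Q -> flipS P = flipS Q.
Proof. by move=> eq_PQ; apply/permP => x; rewrite !flipSE /flipfun eq_PQ. Qed.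

Lemma flipS0 : flipS (fun _ : 'I_m => false) = 1%g.
Proof. by apply/permP => x; rewrite flipSE perm1. Qed.

Lemma flipS_in_Lfix k P : (forall i : 'I_m, k < i -> ~~ P i) -> flipS P \in Lfix k.
Proof.
move=> P_small; rewrite inE; apply/and3P; split.
- by apply/signedP => -[i b]; rewrite !flipSE /flipfun /=; case: (P i).
- apply/abs_evenP; exists 1%g => [i|]; rewrite ?odd_perm1 // perm1 flipSE /flipfun.
  by case: (P i).
- by apply/fixes_aboveP => i /P_small P'i; rewrite flipSE /flipfun /= (negbTE P'i).
Qed.

Lemma liftSE p x : liftS p x = (p x.1, x.2).
Proof. by rewrite permE. Qed.

Lemma liftS_in_Lfix k p :
  ~~ odd_perm p -> (forall i : 'I_m, k < i -> p i = i) -> liftS p \in Lfix k.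
Proof.
move=> ev_p fix_p; rewrite inE; apply/and3P; split.
- by apply/signedP => -[i b]; rewrite !liftSE.
- by apply/abs_evenP; exists p => // i; rewrite liftSE.
- by apply/fixes_aboveP => i /fix_p fix_i; rewrite liftSE fix_i.
Qed.

Lemma flipS_mul P Q : bmul (flipS P) (flipS Q) = flipS (fun i => P i (+) Q i).
Proof.
apply/permP => -[i b]; rewrite bmulE !flipSE /flipfun /=.
by case: (Q i); case: (P i); rewrite /negpt /= ?negbK.
Qed.

Lemma liftSM p q : liftS (p * q) = (liftS p * liftS q)%g.
Proof. by apply/permP => x; rewrite permM !liftSE permM. Qed.

Lemma liftS_conj_flipS p P :
  bprod [:: liftS p; flipS P; ((liftS p)^-1)%g] = flipS (fun i => P ((p^-1)%g i)).
Proof.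
apply/permP => -[i b]; rewrite /= !bmulE perm1.
have -> : ((liftS p)^-1)%g (i, b) = ((p^-1)%g i, b).
  by apply: (canLR (permK _)); rewrite liftSE permKV.
by rewrite !flipSE /flipfun /=; case: (P _); rewrite liftSE permKV.
Qed.

Lemma ord_le1_cases (u v w : 'I_m) : u <= 1 -> v <= 1 -> w <= 1 -> u != v -> w = u \/ w = v.
Proof.
move=> u_small v_small w_small; rewrite -val_eqE /= => ne_uv.
have [->|ne_wu] := eqVneq w u; [by left | right].
by apply: val_inj; move: ne_wu; rewrite -val_eqE /=; lia.
Qed.

Lemma even_perm_fixing_above1 p : (forall i : 'I_m, 1 < i -> p i = i) -> ~~ odd_perm p -> p = 1%g.
Proof.
move=> fix_p ev_p; apply/permP => a; rewrite perm1; apply/eqP/negPn/negP => move_a.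
have small i : p i != i -> (i <= 1) && (p i <= 1).
  move=> move_i; apply/andP; split; rewrite leqNgt; apply: contra move_i.
    by move/fix_p->.
  by move/fix_p/perm_inj->.
have move_pa : p (p a) != p a by rewrite (inj_eq perm_inj).
have /andP[a_small pa_small] := small a move_a.
have ne_apa : a != p a by rewrite eq_sym.
have eq_p : p = tperm a (p a).
  apply/permP => i; case: tpermP => [-> // | -> | ne_ia ne_ipa].
    have /andP[_ ppa_small] := small _ move_pa.
    by case: (ord_le1_cases a_small pa_small ppa_small ne_apa) => // /eqP; rewrite (negbTE move_pa).
  apply/eqP/negPn/negP => /small /andP[i_small _].
  by case: (ord_le1_cases a_small pa_small i_small ne_apa).
by move: ev_p; rewrite eq_p odd_tperm ne_apa.
Qed.

Lemma signed_flipS s : signed s -> (forall i : 'I_m, (s (i, false)).1 = i) ->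
  s = flipS (fun i => (s (i, false)).2).
Proof.
move=> /signedP s_neg abs_s; apply/permP => -[i b]; rewrite flipSE /flipfun /=.
have s_i : s (i, false) = (i, (s (i, false)).2) by rewrite -{2}(abs_s i) -surjective_pairing.
case: b; last by rewrite s_i; case: (s _).2.
by rewrite -[(i, true)]/(negpt (i, false)) s_neg s_i; case: (s _).2.
Qed.

Lemma Lfix1_flipS s : s \in Lfix 1 -> s = flipS (fun i => (s (i, false)).2).
Proof.
move=> L1s; move: (L1s); rewrite inE => /and3P[s_sgn /abs_evenP[p abs_p ev_p] _].
apply: signed_flipS => // i; rewrite -abs_p (even_perm_fixing_above1 _ ev_p) ?perm1 //.
by move=> j lt1j; rewrite abs_p (Lfix_fixed _ L1s).
Qed.

End SignedPermutations.

Arguments Lfix {m} k.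
Arguments Lfix_group {m} k.

Section Generators.
Variable n : nat.
Implicit Types (i j k c : nat) (b : bool).

Lemma inord_eqE k (i : 'I_n.+1) : k <= n -> (inord k == i) = (k == i).
Proof. by move=> le_kn; rewrite -val_eqE /= inordK. Qed.

Lemma inord_neq k c : k <= n -> c <= n -> k != c -> (inord k : 'I_n.+1) != inord c.
Proof. by move=> le_kn le_cn; rewrite inord_eqE // inordK. Qed.

Lemma ag_liftS i : 0 < i ->
  ag n i = liftS (tperm (inord i) (inord i.+1) * tperm (inord 0) (inord 1)).
Proof. by case: i => // i _; rewrite /ag /bmul liftSM. Qed.

Lemma ag0_0 b : ag n 0 (inord 0, b) = (inord 0, ~~ b).
Proof. by rewrite /ag /s0 flipSE /flipfun /= inordK. Qed.

Lemma ag_up i b : 0 < i < n -> ag n i (inord i, b) = (inord i.+1, b).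
Proof.
case/andP => i_pos lt_in; rewrite ag_liftS // liftSE permM tpermL tpermD //.
  by rewrite inord_neq //; lia.
by rewrite inord_neq //; lia.
Qed.

Lemma ag_down i b : 1 < i < n -> ag n i (inord i.+1, b) = (inord i, b).
Proof.
case/andP => lt1i lt_in; rewrite ag_liftS 1?ltnW // liftSE permM tpermR tpermD //.
  by rewrite inord_neq //; lia.
by rewrite inord_neq //; lia.
Qed.

Lemma ag1_2 b : ag n 1 (inord 2, b) = (inord 0, b).
Proof. by rewrite ag_liftS // liftSE permM !tpermR. Qed.

Lemma ag1_0 b : 1 < n -> ag n 1 (inord 0, b) = (inord 1, b).
Proof.
move=> lt1n; rewrite ag_liftS // liftSE /= permM [tperm (inord 1) _ _]tpermD ?tpermL //.
  by rewrite inord_neq //; lia.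
by rewrite inord_neq //; lia.
Qed.

Lemma ag_in_Lfix i j : i <= j -> j < n -> ag n i \in Lfix j.+1.
Proof.
move=> le_ij lt_jn; apply: (@Lfix_mono _ i.+1) => //.
have {le_ij lt_jn} lt_in : i < n by apply: leq_ltn_trans lt_jn.
case: i lt_in => [_ | i lt_in]; first by apply: flipS_in_Lfix => -[[|k] ?].
rewrite ag_liftS //; apply: liftS_in_Lfix => [|k lt_ik].
  by rewrite odd_permM !odd_tperm !inord_neq //; lia.
by rewrite permM !tpermD // inord_eqE //= ?(leq_trans (ltnW lt_in)) ?ltn_eqF; lia.
Qed.

Lemma adec_nil j : adec n j.+1 j = 1%g.
Proof. by rewrite /adec subnn. Qed.

Lemma adecS k j : k <= j.+1 -> adec n k j.+1 = bmul (ag n j.+1) (adec n k j).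
Proof. by move=> le_kj; rewrite /adec (subSn le_kj) -[(_ - k).+1]addn1 iotaD rev_cat /= subnKC. Qed.

Lemma aincS k : ainc n k.+1 = bmul (ainc n k) (ag n k.+1).
Proof. by rewrite /ainc -[k.+1]addn1 iotaD cats1 map_rcons bprod_rcons add1n addn1. Qed.

Lemma adec_up k j b : 0 < k <= j.+1 -> j < n -> adec n k j (inord k, b) = (inord j.+1, b).
Proof.
case/andP=> k_pos; elim: j => [|j IH] le_kj lt_jn.
  have -> : k = 1 by lia.
  by rewrite adec_nil perm1.
move: le_kj; rewrite leq_eqVlt => /orP[/eqP-> | lt_kj]; first by rewrite adec_nil perm1.
by rewrite adecS // bmulE IH ?ag_up //; lia.
Qed.

Lemma ainc_down k b : 0 < k < n -> ainc n k (inord k.+1, b) = (inord 0, b).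
Proof.
elim: k => [|[|k] IH] // lt_kn; first by rewrite /ainc /= bmulE perm1 ag1_2.
by rewrite aincS bmulE ag_down ?IH //; lia.
Qed.

End Generators.

Section Transversals.
Variable n : nat.
Implicit Types (i j k : nat) (b : bool) (p : pt n.+1) (r s : {perm pt n.+1}).

Lemma bprod_ag_in_Lfix j (l : seq nat) : j < n -> all (leq^~ j) l ->
  bprod [seq ag n i | i <- l] \in Lfix j.+1.
Proof.
move=> lt_jn /allP small_l; apply: group_bprod => _ /mapP[i /small_l le_ij ->].
exact: ag_in_Lfix.
Qed.

Lemma Lfix_stab k : k < n ->
  @Lfix n.+1 k =i [pred s in Lfix k.+1 | s (inord k.+1, false) == (inord k.+1, false)].
Proof.
move=> lt_kn s; rewrite !inE.
have -> : fixes_above k s = fixes_above k.+1 s && (s (inord k.+1, false) == (inord k.+1, false)).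
  apply/fixes_aboveP/andP => [fix_s | [/fixes_aboveP fix_s /eqP fix_k1] i].
    split; first by apply/fixes_aboveP => i /ltnW /fix_s.
    by apply/eqP/fix_s; rewrite inordK.
  rewrite leq_eqVlt => /orP[/eqP eq_i | /fix_s //].
  by have -> : i = inord k.+1 by apply: val_inj; rewrite /= inordK.
by case: (signed s); case: (abs_even s).
Qed.

Lemma R0L_flips : 0 < n -> R0L n =
  [:: 1%g; flipS (fun i : 'I_n.+1 => val i == 0); flipS (fun i : 'I_n.+1 => val i == 1);
      flipS (fun i : 'I_n.+1 => val i <= 1)].
Proof.
rewrite /R0L; case: eqP => // /eqP ne_n1 n_pos.
have lt1n : 1 < n by rewrite ltn_neqAle eq_sym ne_n1.
have a1_0 : tperm (inord 1) (inord 2) (inord 0) = inord 0 :> 'I_n.+1.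
  by rewrite tpermD // inord_neq //; lia.
have conj_a0 : bprod [:: ag n 1; ag n 0; ((ag n 1)^-1)%g] = flipS (fun i : 'I_n.+1 => val i == 1).
  rewrite (ag_liftS n (ltnSn 0)) liftS_conj_flipS; apply: flipS_ext => i /=.
  rewrite eq_sym -inord_eqE // eq_sym (can2_eq (permKV _) (permK _)) permM a1_0 tpermL.
  by rewrite eq_sym inord_eqE // eq_sym.
have -> : bprod [:: ag n 0; ag n 1; ag n 0; ((ag n 1)^-1)%g] =
    bmul (ag n 0) (bprod [:: ag n 1; ag n 0; ((ag n 1)^-1)%g]) by [].
rewrite conj_a0 flipS_mul; congr [:: _; _; _; _]; apply: flipS_ext => i.
by case: (val i) => [|[|k]].
Qed.

Lemma flipS_le1 (c : pred 'I_n.+1) : 0 < n -> (forall i : 'I_n.+1, 1 < i -> ~~ c i) ->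
  flipS c \in [:: 1%g; flipS (fun i : 'I_n.+1 => val i == 0);
                flipS (fun i : 'I_n.+1 => val i == 1); flipS (fun i : 'I_n.+1 => val i <= 1)].
Proof.
move=> n_pos c_small.
have -> : flipS c =
    flipS (fun i : 'I_n.+1 => (val i == 0) && c (inord 0) || (val i == 1) && c (inord 1)).
  apply: flipS_ext => i; case: (ltnP 1 i) => [lt1i | le_i1].
    by rewrite (negbTE (c_small _ lt1i)) /=; case: (nat_of_ord i) lt1i => [|[|]].
  by case: (ord_le1_cases (u := inord 0) (v := inord 1) _ _ le_i1) => [|||->|->] /=;
    rewrite ?inordK ?inord_neq // orbF.
rewrite !in_cons in_nil orbF.
case: (c _); case: (c _); apply/or4P;
  [constructor 4 | constructor 2 | constructor 3 | constructor 1; rewrite -(@flipS0 n.+1)];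
  by apply/eqP/flipS_ext => i; case: (val i) => [|[|]].
Qed.

Lemma R0L_Lfix : 0 < n -> R0L n =i Lfix 1.
Proof.
move=> n_pos s; rewrite R0L_flips //; apply/idP/idP => [|L1s].
  by rewrite !in_cons in_nil orbF => /or4P[] /eqP->; rewrite ?group1 //;
    apply: flipS_in_Lfix => -[[|[|k]] ?].
rewrite (Lfix1_flipS L1s); apply: flipS_le1 => // i lt1i.
by rewrite (Lfix_fixed _ L1s lt1i).
Qed.

Definition adec_a1V j := bmul (adec n 2 j) ((ag n 1)^-1)%g.

Lemma mem_RjL j r : (r \in RjL n j) = [|| r \in [seq adec n k j | k <- iota 1 j.+1],
  r == adec_a1V j, r == bmul (adec_a1V j) (ag n 0),
  r == bprod [:: adec_a1V j; ag n 0; ((ag n 1)^-1)%g]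
  | r \in [seq bprod [:: adec_a1V j; ag n 0; ainc n k] | k <- iota 1 j]].
Proof. by rewrite /RjL /RjA !mem_cat !inE -!orbA. Qed.

Lemma adec_in_RjL k j : 0 < k <= j.+1 -> adec n k j \in RjL n j.
Proof. by move=> k_in; rewrite mem_RjL (map_f (fun k => adec n k j)) // mem_iota. Qed.

Lemma ainc_in_RjL k j : 0 < k <= j ->
  bprod [:: adec_a1V j; ag n 0; ainc n k] \in RjL n j.
Proof.
move=> k_in; rewrite mem_RjL (map_f (fun k => bprod [:: adec_a1V j; ag n 0; ainc n k])) ?orbT //.
by rewrite mem_iota; lia.
Qed.

Lemma RjL_sub_Lfix j : 0 < j < n -> {subset RjL n j <= Lfix j.+1}.
Proof.
case/andP=> j_pos lt_jn.
have ag_j i : i <= j -> ag n i \in Lfix j.+1 by move/ag_in_Lfix; apply.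
have adec_j k : adec n k j \in Lfix j.+1.
  by apply: bprod_ag_in_Lfix => //; apply/allP => i; rewrite mem_rev mem_iota; lia.
move=> r; rewrite mem_RjL.
case/or4P=> [/mapP[k _ ->] // | /eqP-> | /eqP-> | /orP[/eqP-> | /mapP[k k_in ->]]];
  rewrite !group_bmul ?groupV ?group1 ?ag_j ?adec_j //.
by apply: bprod_ag_in_Lfix => //; apply/allP => i /=; move: k_in; rewrite !mem_iota; lia.
Qed.

Definition coset_rep j k b : {perm pt n.+1} :=
  match k, b with
  | 0, false => adec_a1V j
  | k, false => adec n k j
  | 0, true => bmul (adec_a1V j) (ag n 0)
  | 1, true => bprod [:: adec_a1V j; ag n 0; ((ag n 1)^-1)%g]
  | k.+1, true => bprod [:: adec_a1V j; ag n 0; ainc n k]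
  end.

Lemma coset_repP j k b : 0 < j < n -> k <= j.+1 ->
  coset_rep j k b \in RjL n j /\ coset_rep j k b (inord k, b) = (inord j.+1, false).
Proof.
case/andP=> j_pos lt_jn.
have q0 c : adec_a1V j (inord 0, c) = (inord j.+1, c).
  by rewrite bmulE -(ag1_2 n c) permK adec_up //; apply/andP.
have bmulE3 r s t y : bmul r (bmul s (bmul t 1)) y = r (s (t y)) by rewrite !bmulE perm1.
case: b; case: k => [|[|k]] le_kj; rewrite /coset_rep.
- by rewrite mem_RjL eqxx !orbT bmulE ag0_0 q0.
- by rewrite mem_RjL eqxx !orbT bmulE3 -(ag1_0 _ (leq_ltn_trans j_pos lt_jn)) permK ag0_0 q0.
- by rewrite ainc_in_RjL ?bmulE3 ?ainc_down ?ag0_0 ?q0 //; lia.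
- by rewrite mem_RjL eqxx orbT q0.
- by rewrite adec_in_RjL ?adec_up.
by rewrite adec_in_RjL ?adec_up //; lia.
Qed.

Lemma coset_rep_onto j r : r \in RjL n j -> exists k b, k <= j.+1 /\ coset_rep j k b = r.
Proof.
rewrite mem_RjL; case/or4P=> [/mapP[k] | /eqP-> | /eqP-> | /orP[/eqP-> | /mapP[k]]].
- rewrite mem_iota => /andP[k_pos lt_kj] ->; exists k, false; split; first lia.
  by case: k k_pos {lt_kj} => [|[|k]].
- by exists 0, false.
- by exists 0, true.
- by exists 1, true.
rewrite mem_iota => /andP[k_pos lt_kj] ->; exists k.+1, true; split; first lia.
by case: k k_pos {lt_kj} => [|[|k]].
Qed.

Lemma coset_repK j r : 0 < j < n -> r \in RjL n j ->
  coset_rep j ((r^-1)%g (inord j.+1, false)).1 ((r^-1)%g (inord j.+1, false)).2 = r.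
Proof.
move=> jn /coset_rep_onto[k [b [le_kj <-]]]; have [_ <-] := coset_repP b jn le_kj.
by rewrite permK /= inordK // ltnS (leq_trans le_kj) //; case/andP: jn.
Qed.

Lemma coset_rep_cover j s : 0 < j < n -> s \in Lfix j.+1 ->
  (s^-1)%g (inord j.+1, false) \in
    [seq (r^-1)%g (inord j.+1, false) | r : {perm pt n.+1} <- RjL n j].
Proof.
move=> jn Ls; set p := (s^-1)%g _.
have le_pj : p.1 <= j.+1.
  apply: Lfix_small; first by rewrite groupV.
  by case/andP: jn => _ lt_jn; rewrite /= inordK.
have [Rp rep_p] := coset_repP p.2 jn le_pj.
by apply/mapP; exists (coset_rep j p.1 p.2); rewrite // -rep_p inord_val -surjective_pairing permK.
Qed.

End Transversals.

Section Factorization.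
Variables (n : nat) (n_pos : 0 < n).

Let G j := Lfix_group (m := n.+1) j.+1.
Let x j : pt n.+1 := (inord j.+1, false).

Let R0 : RL n 0 =i G 0.
Proof. exact: R0L_Lfix. Qed.

Let stab j : j.+1 < n -> G j =i [pred s in G j.+1 | s (x j.+1) == x j.+1].
Proof. exact: Lfix_stab. Qed.

Let sub j : j.+1 < n -> {subset RL n j.+1 <= G j.+1}.
Proof. by move=> lt_jn; apply: RjL_sub_Lfix. Qed.

Let inj j : j.+1 < n -> {in RL n j.+1 &, injective (fun r : {perm pt n.+1} => (r^-1)%g (x j.+1))}.
Proof.
move=> lt_jn r r' Rr Rr' /= eq_rr'.
by rewrite -(@coset_repK n j.+1 r) // eq_rr' coset_repK.
Qed.

Let cover j : j.+1 < n -> {in G j.+1, forall s : {perm pt n.+1},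
  (s^-1)%g (x j.+1) \in [seq (r^-1)%g (x j.+1) | r : {perm pt n.+1} <- RL n j.+1]}.
Proof. by move=> lt_jn s; apply: coset_rep_cover. Qed.

Lemma RL_factor j s : j < n -> s \in Lfix j.+1 ->
  exists2 f : nat -> {perm pt n.+1},
    forall i, i <= j -> f i \in RL n i & s = bprod [seq f i | i <- iota 0 j.+1].
Proof. exact: (chain_factor R0 stab sub cover). Qed.

Lemma RL_factor_unique j (f g : nat -> {perm pt n.+1}) : j < n ->
  (forall i, i <= j -> f i \in RL n i) -> (forall i, i <= j -> g i \in RL n i) ->
  bprod [seq f i | i <- iota 0 j.+1] = bprod [seq g i | i <- iota 0 j.+1] ->
  forall i, i <= j -> f i = g i.
Proof. exact: (chain_factor_unique R0 stab sub inj). Qed.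

End Factorization.

Theorem theorem2p11 (n : nat) (hn : 1 <= n) (pi : {perm pt n.+1}) :
  pi \in Lm n.+1 ->
  exists f : 'I_n -> {perm pt n.+1},
    (forall j : 'I_n, f j \in RL n j) /\
    pi = bprod [seq f j | j <- enum 'I_n] /\
    (forall g : 'I_n -> {perm pt n.+1},
       (forall j : 'I_n, g j \in RL n j) ->
       pi = bprod [seq g j | j <- enum 'I_n] ->
       forall j, g j = f j).
Proof.
case: n hn pi => // n _ pi /Lm_sub_Lfix L_pi.
have enum_iota (h : nat -> {perm pt n.+2}) :
    [seq h (val j) | j <- enum 'I_n.+1] = [seq h i | i <- iota 0 n.+1].
  by rewrite -val_enum_ord -map_comp.
have [f Rf E_pi] := RL_factor (ltn0Sn n) (ltnSn n) L_pi.
exists (fun j => f j); split=> [j | ]; first by apply: Rf; rewrite -ltnS.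
split=> [| g Rg E'_pi j]; first by rewrite enum_iota.
have Rg_nat i : i <= n -> g (inord i) \in RL n.+1 i.
  by move=> le_in; have := Rg (inord i); rewrite inordK.
have E_g : bprod [seq g (inord i) | i <- iota 0 n.+1] = bprod [seq f i | i <- iota 0 n.+1].
  by rewrite -E_pi E'_pi -enum_iota; congr bprod; apply: eq_map => k; rewrite inord_val.
have := RL_factor_unique (ltn0Sn n) (ltnSn n) Rg_nat Rf E_g (ltn_ord j).
by rewrite inord_val.
Qed.
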